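(* Let $n\ge1$, $m>1$, $a\in\mathbb{R}^n$, $d\in\mathbb{R}^m$ with $\|a\|\le\|d\|$, $S_{\le0}=\{(x,y)\in\mathbb{R}^{n+m}:\|x\|\le\|y\|,\ a^\mathsf{T} x+d^\mathsf{T} y\le0\}$, and $\lambda\in\mathbb{R}^n$ with $\|\lambda\|=1$. Let $C_\lambda=\{(x,y):\lambda^\mathsf{T} x\ge\|y\|\}$, $G(\lambda)=\{\beta\in\mathbb{R}^m:\|\beta\|=1,\ a^\mathsf{T}\lambda+d^\mathsf{T}\beta\le0\}$ and $C_{G(\lambda)}=\{(x,y):-\lambda^\mathsf{T} x+\beta^\mathsf{T} y\le0\ \forall\beta\in G(\lambda)\}$. If $C_{G(\lambda)}\neq\emptyset$ and $C$ is any $S_{\le0}$-free convex set with $C_\lambda\subseteq C$, then $C\subseteq C_{G(\lambda)}$.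
   Context: $\|\cdot\|$ is the Euclidean norm. A convex set $C$ is $S$-free if $\operatorname{int}(C)\cap S=\emptyset$. *)

(* Points of R^{n+m} are pairs (x,y) with x : 'rV[R]_n, y : 'rV[R]_m. *)
From HB Require Import structures.
From mathcomp Require Import all_boot all_order all_algebra.
From mathcomp Require Import reals.
Set Implicit Arguments. Unset Strict Implicit. Unset Printing Implicit Defensive.
Import Order.TTheory GRing.Theory Num.Theory.
Local Open Scope ring_scope.

Section Defs.
Variable R : realType.

Definition dotv (k : nat) (u v : 'rV[R]_k) : R := \sum_(i < k) u 0 i * v 0 i.
Definition enorm (k : nat) (u : 'rV[R]_k) : R := Num.sqrt (dotv u u).

Definition pnorm (n m : nat) (z : 'rV[R]_n * 'rV[R]_m) : R :=
  Num.sqrt (dotv z.1 z.1 + dotv z.2 z.2).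

Definition interior_e (n m : nat) (C : 'rV[R]_n * 'rV[R]_m -> Prop)
  (z : 'rV[R]_n * 'rV[R]_m) : Prop :=
  exists2 eps : R, 0 < eps &
    forall w : 'rV[R]_n * 'rV[R]_m,
      pnorm (w.1 - z.1, w.2 - z.2) < eps -> C w.

Definition convex_e (n m : nat) (C : 'rV[R]_n * 'rV[R]_m -> Prop) : Prop :=
  forall (z w : 'rV[R]_n * 'rV[R]_m) (t : R), C z -> C w -> 0 <= t -> t <= 1 ->
    C (t *: z.1 + (1 - t) *: w.1, t *: z.2 + (1 - t) *: w.2).

Definition S_free (n m : nat) (S C : 'rV[R]_n * 'rV[R]_m -> Prop) : Prop :=
  convex_e C /\ (forall z, interior_e C z -> S z -> False).

Definition S_le0 (n m : nat) (a : 'rV[R]_n) (d : 'rV[R]_m)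
  (z : 'rV[R]_n * 'rV[R]_m) : Prop :=
  enorm z.1 <= enorm z.2 /\ dotv a z.1 + dotv d z.2 <= 0.

Definition C_lam (n m : nat) (lam : 'rV[R]_n) (z : 'rV[R]_n * 'rV[R]_m) : Prop :=
  dotv lam z.1 >= enorm z.2.

Definition G_lam (n m : nat) (a lam : 'rV[R]_n) (d : 'rV[R]_m) (beta : 'rV[R]_m) : Prop :=
  enorm beta = 1 /\ dotv a lam + dotv d beta <= 0.

Definition C_G (n m : nat) (a lam : 'rV[R]_n) (d : 'rV[R]_m)
  (z : 'rV[R]_n * 'rV[R]_m) : Prop :=
  forall beta, G_lam a lam d beta -> - dotv lam z.1 + dotv beta z.2 <= 0.

End Defs.

From HB Require Import structures.
From mathcomp Require Import all_boot all_order all_algebra.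
From mathcomp Require Import reals.
From mathcomp Require Import ring lra.
Set Implicit Arguments. Unset Strict Implicit. Unset Printing Implicit Defensive.
Import Order.TTheory GRing.Theory Num.Theory.
Local Open Scope ring_scope.

(** Suppose [z] is in [C] and [beta] in [G(lam)] with
    [delta := - lam^T z.1 + beta^T z.2 > 0].  Put [p = lam^T z.1],
    [r = |z.1 - p lam|] and choose (using [m > 1]) a unit [e] orthogonal to
    [beta] with [d^T e <= - |d - (d^T beta) beta|].  The points
    [w(t) = (z.1 + t lam, (t + p) beta + r e)] satisfy [|w.1| = |w.2|], and
    [a^T w.1 + d^T w.2 <= 0] for large [t] because [a^T lam + d^T beta <= 0]
    and [|a| <= |d|]; as [S_le0] is a cone, [w(t)/2] lies in [S_le0].
    On the other hand [w(t) - z = (t lam, t beta + g)] with [beta^T g = - delta],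
    so [|t beta + g| < t] for large [t]: [w(t) - z] is interior to
    [C_lam], hence to [C], and by convexity so is the midpoint [w(t)/2] of
    [z] and [w(t) - z].  This contradicts the [S_le0]-freeness of [C]. *)

Section Euclidean.
Variable R : realType.
Implicit Types (k : nat).

Lemma dotvC k (u v : 'rV[R]_k) : dotv u v = dotv v u.
Proof. by apply: eq_bigr => i _; rewrite mulrC. Qed.

Lemma dotvDl k (u v w : 'rV[R]_k) : dotv (u + v) w = dotv u w + dotv v w.
Proof. by rewrite /dotv -big_split; apply: eq_bigr => i _; rewrite mxE mulrDl. Qed.

Lemma dotvZl k (c : R) (u w : 'rV[R]_k) : dotv (c *: u) w = c * dotv u w.
Proof. by rewrite /dotv mulr_sumr; apply: eq_bigr => i _; rewrite mxE mulrA. Qed.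

Lemma dotvNl k (u w : 'rV[R]_k) : dotv (- u) w = - dotv u w.
Proof. by rewrite -scaleN1r dotvZl mulN1r. Qed.

Lemma dotvBl k (u v w : 'rV[R]_k) : dotv (u - v) w = dotv u w - dotv v w.
Proof. by rewrite dotvDl dotvNl. Qed.

Lemma dotvDr k (u v w : 'rV[R]_k) : dotv w (u + v) = dotv w u + dotv w v.
Proof. by rewrite dotvC dotvDl !(dotvC w). Qed.

Lemma dotvZr k (c : R) (u w : 'rV[R]_k) : dotv w (c *: u) = c * dotv w u.
Proof. by rewrite dotvC dotvZl dotvC. Qed.

Lemma dotvNr k (u w : 'rV[R]_k) : dotv w (- u) = - dotv w u.
Proof. by rewrite dotvC dotvNl dotvC. Qed.

Lemma dotvBr k (u v w : 'rV[R]_k) : dotv w (u - v) = dotv w u - dotv w v.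
Proof. by rewrite dotvDr dotvNr. Qed.

Lemma dotv0r k (u : 'rV[R]_k) : dotv u 0 = 0.
Proof. by rewrite /dotv big1 // => i _; rewrite mxE mulr0. Qed.

Definition dotvE := (dotvDl, dotvDr, dotvZl, dotvZr, dotvNl, dotvNr, dotvBl, dotvBr).

Lemma dotv_delta_mx k (i : 'I_k) (u : 'rV[R]_k) : dotv (delta_mx 0 i) u = u 0 i.
Proof.
rewrite /dotv (bigD1 i) //= big1 ?addr0; first by rewrite mxE !eqxx mul1r.
by move=> j ji; rewrite mxE (negbTE ji) andbF mul0r.
Qed.

Lemma dotvv_ge0 k (u : 'rV[R]_k) : 0 <= dotv u u.
Proof. by apply: sumr_ge0 => i _; rewrite -expr2 sqr_ge0. Qed.

Lemma dotvv_gt0 k (u : 'rV[R]_k) : (0 < dotv u u) = (u != 0).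
Proof.
rewrite lt_def dotvv_ge0 andbT; congr negb.
apply/eqP/eqP => [/psumr_eq0P u0|->]; last exact: dotv0r.
apply/rowP => i; rewrite mxE; apply/eqP.
by rewrite -sqrf_eq0 expr2 u0 // => j _; rewrite -expr2 sqr_ge0.
Qed.

Lemma sqr_coordD_le_dotvv k (i j : 'I_k) (u : 'rV[R]_k) : i != j ->
  u 0 i ^+ 2 + u 0 j ^+ 2 <= dotv u u.
Proof.
move=> ij; rewrite /dotv (bigD1 i) //= (bigD1 j) 1?eq_sym //= -!expr2 addrA.
by rewrite lerDl; apply: sumr_ge0 => l _; rewrite -expr2 sqr_ge0.
Qed.

Lemma cauchy_schwarz k (u v : 'rV[R]_k) : dotv u v ^+ 2 <= dotv u u * dotv v v.
Proof.
have [->|v0] := eqVneq v 0; first by rewrite !dotv0r expr0n mulr0.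
have vv := dotvv_gt0 v; rewrite v0 in vv.
pose w := dotv v v *: u - dotv u v *: v.
have -> : dotv u v ^+ 2 = dotv u u * dotv v v - dotv w w / dotv v v.
  by rewrite /w !dotvE (dotvC v u); field; rewrite gt_eqF.
by rewrite gerBl divr_ge0 ?dotvv_ge0 ?ltW.
Qed.

Lemma sqr_enorm k (u : 'rV[R]_k) : enorm u ^+ 2 = dotv u u.
Proof. exact/sqr_sqrtr/dotvv_ge0. Qed.

Lemma enorm_ge0 k (u : 'rV[R]_k) : 0 <= enorm u.
Proof. exact: sqrtr_ge0. Qed.

Lemma enorm_eq0 k (u : 'rV[R]_k) : (enorm u == 0) = (u == 0).
Proof. by rewrite sqrtr_eq0 leNgt dotvv_gt0 negbK. Qed.

Lemma ler_enorm k l (u : 'rV[R]_k) (v : 'rV[R]_l) :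
  (enorm u <= enorm v) = (dotv u u <= dotv v v).
Proof. exact/ler_sqrt/dotvv_ge0. Qed.

Lemma normr_dotv_le k (u v : 'rV[R]_k) : `|dotv u v| <= enorm u * enorm v.
Proof.
rewrite /enorm -sqrtrM ?dotvv_ge0 // -sqrtr_sqr.
exact/ler_wsqrtr/cauchy_schwarz.
Qed.

Lemma enormD k (u v : 'rV[R]_k) : enorm (u + v) <= enorm u + enorm v.
Proof.
rewrite -ler_sqr ?nnegrE ?addr_ge0 ?enorm_ge0 // sqrrD !sqr_enorm !dotvE.
have := le_trans (ler_norm _) (normr_dotv_le u v).
by rewrite (dotvC v u); lra.
Qed.

Lemma enormZD_lt_eventually k (b g : 'rV[R]_k) : dotv b b = 1 -> dotv b g < 0 ->
  exists M0, forall M, M0 <= M -> enorm (M *: b + g) < M.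
Proof.
move=> b1 bg; set c := - dotv b g; have c0 : 0 < c by rewrite oppr_gt0.
have gg := dotvv_ge0 g.
exists (dotv g g / c + 1) => M M_large.
have M0 : 0 < M.
  by apply: lt_le_trans M_large; have := divr_ge0 gg (ltW c0); lra.
have Mc : dotv g g + c <= M * c.
  by move: M_large; rewrite -(ler_pM2r c0) mulrDl mul1r divfK ?gt_eqF.
rewrite /enorm -[M in _ < M]ger0_norm ?ltW // -sqrtr_sqr ltr_sqrt ?exprn_gt0 //.
have bgc : dotv b g = - c by rewrite opprK.
by rewrite !dotvE b1 (dotvC g b) bgc; nra.
Qed.

Definition perp k (b u : 'rV[R]_k) := u - dotv b u *: b.

Section Perp.
Variables (k : nat) (b : 'rV[R]_k).
Hypothesis b1 : dotv b b = 1.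

Lemma dotv_perp u : dotv b (perp b u) = 0.
Proof. by rewrite /perp !dotvE b1 mulr1 subrr. Qed.

Lemma dotvv_perp u : dotv (perp b u) (perp b u) = dotv u u - dotv b u ^+ 2.
Proof. by rewrite /perp !dotvE b1 (dotvC u b); ring. Qed.

End Perp.

Lemma dotv_orth_le k (b a y : 'rV[R]_k) :
  dotv b y = 0 -> dotv a y <= enorm (perp b a) * enorm y.
Proof.
move=> by0; have -> : dotv a y = dotv (perp b a) y by rewrite /perp !dotvE by0; ring.
exact: le_trans (ler_norm _) (normr_dotv_le _ _).
Qed.

Lemma dotvv_normalize k (f : 'rV[R]_k) : f != 0 ->
  dotv ((enorm f)^-1 *: f) ((enorm f)^-1 *: f) = 1.
Proof.
rewrite -enorm_eq0 => nf.
by rewrite !dotvE -sqr_enorm; field.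
Qed.

Lemma exists_unit_orthogonal k (b : 'rV[R]_k) : (1 < k)%N -> dotv b b = 1 ->
  exists e, dotv b e = 0 /\ dotv e e = 1.
Proof.
move=> k1 b1.
have perp_delta i : dotv (perp b (delta_mx 0 i)) (perp b (delta_mx 0 i))
                    = 1 - b 0 i ^+ 2.
  by rewrite dotvv_perp // (dotvC b) !dotv_delta_mx mxE !eqxx.
have [i fi0] : exists i, perp b (delta_mx 0 i) != 0.
  pose i0 := Ordinal (ltnW k1); pose i1 := Ordinal k1.
  have [f0|] := eqVneq (perp b (delta_mx 0 i0)) 0; last by exists i0.
  exists i1; apply/eqP => f1.
  have := @sqr_coordD_le_dotvv _ i0 i1 b isT; rewrite b1.
  move: (perp_delta i0) (perp_delta i1); rewrite f0 f1 dotv0r; lra.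
exists ((enorm (perp b (delta_mx 0 i)))^-1 *: perp b (delta_mx 0 i)).
by rewrite dotvZr dotv_perp // mulr0 dotvv_normalize.
Qed.

Lemma exists_unit_orthogonal_below k (b d : 'rV[R]_k) : (1 < k)%N -> dotv b b = 1 ->
  exists e, [/\ dotv b e = 0, dotv e e = 1 & dotv d e <= - enorm (perp b d)].
Proof.
move=> k1 b1; set f := perp b d.
have [f0|f0] := eqVneq f 0.
  have [e [be e1]] := exists_unit_orthogonal k1 b1.
  rewrite f0 /enorm dotv0r sqrtr0 oppr0.
  have [de|de] := lerP (dotv d e) 0; first by exists e.
  by exists (- e); rewrite !dotvE be e1 opprK oppr0; split => //; lra.
have df : dotv d f = enorm f ^+ 2.
  by rewrite sqr_enorm dotvv_perp // /f /perp !dotvE (dotvC d b); ring.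
exists (- ((enorm f)^-1 *: f)); split.
- by rewrite dotvNr dotvZr dotv_perp // mulr0 oppr0.
- by rewrite dotvNl dotvNr opprK dotvv_normalize.
- by rewrite dotvNr dotvZr df expr2 mulrA mulVf ?mul1r ?enorm_eq0.
Qed.

End Euclidean.

Section FreeSets.
Variables (R : realType) (n m : nat).
Local Notation point := ('rV[R]_n * 'rV[R]_m)%type.
Implicit Types (z v w : point) (C D : point -> Prop).

Lemma enorm_fst_le_pnorm z : enorm z.1 <= pnorm z.
Proof. by apply: ler_wsqrtr; rewrite lerDl dotvv_ge0. Qed.

Lemma enorm_snd_le_pnorm z : enorm z.2 <= pnorm z.
Proof. by apply: ler_wsqrtr; rewrite lerDr dotvv_ge0. Qed.

Lemma pnormZ (c : R) (x : 'rV[R]_n) (y : 'rV[R]_m) :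
  pnorm (c *: x, c *: y) = `|c| * pnorm (x, y).
Proof.
rewrite /pnorm /= !dotvZl !dotvZr !mulrA -mulrDr sqrtrM -?expr2 ?sqr_ge0 //.
by rewrite sqrtr_sqr.
Qed.

Lemma sub_interior_e C D : (forall z, C z -> D z) ->
  forall z, interior_e C z -> interior_e D z.
Proof. by move=> CD z [eps eps0 ball]; exists eps => // w /ball/CD. Qed.

Lemma interior_C_lam (lam : 'rV[R]_n) v : enorm lam = 1 ->
  enorm v.2 < dotv lam v.1 -> interior_e (C_lam (m := m) lam) v.
Proof.
move=> lam1 slack; exists ((dotv lam v.1 - enorm v.2) / 2); first lra.
move=> w wv; rewrite /C_lam.
have near1 : - dotv lam (w.1 - v.1) <= pnorm (w.1 - v.1, w.2 - v.2).
  apply: le_trans (enorm_fst_le_pnorm (w.1 - v.1, w.2 - v.2)).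
  apply: le_trans (_ : _ <= `|dotv lam (w.1 - v.1)|) _; first by rewrite -normrN ler_norm.
  by rewrite -[X in _ <= X]mul1r -lam1 normr_dotv_le.
have near2 : enorm w.2 <= enorm v.2 + pnorm (w.1 - v.1, w.2 - v.2).
  have := enormD v.2 (w.2 - v.2); rewrite addrC subrK => /le_trans; apply.
  by rewrite lerD2l (enorm_snd_le_pnorm (w.1 - v.1, w.2 - v.2)).
by move: near1; rewrite dotvBr; lra.
Qed.

Lemma convex_interior_e C z v (t : R) : convex_e C -> C z -> interior_e C v ->
  0 < t -> t <= 1 ->
  interior_e C (t *: v.1 + (1 - t) *: z.1, t *: v.2 + (1 - t) *: z.2).
Proof.
move=> Cconv Cz [eps eps0 ball] t0 t1; exists (t * eps); first exact: mulr_gt0.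
move=> w wP; pose u := (t^-1 *: (w.1 - (1 - t) *: z.1), t^-1 *: (w.2 - (1 - t) *: z.2)).
have tt : t != 0 by rewrite gt_eqF.
have -> : w = (t *: u.1 + (1 - t) *: z.1, t *: u.2 + (1 - t) *: z.2).
  by rewrite [LHS]surjective_pairing; congr pair; apply/rowP => i; rewrite !mxE; field.
apply: Cconv => //; last by lra.
apply: ball; move: wP.
have -> : (u.1 - v.1, u.2 - v.2) = (t^-1 *: (w.1 - (t *: v.1 + (1 - t) *: z.1)),
                                   t^-1 *: (w.2 - (t *: v.2 + (1 - t) *: z.2))).
  by congr pair; apply/rowP => i; rewrite !mxE; field.
rewrite pnormZ ger0_norm ?invr_ge0 ?ltW //.
by move=> /= wP; rewrite mulrC ltr_pdivrMr // mulrC.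
Qed.

Lemma S_le0Z (a : 'rV[R]_n) (d : 'rV[R]_m) (c : R) z : 0 <= c ->
  S_le0 a d z -> S_le0 a d (c *: z.1, c *: z.2).
Proof.
move=> c0 [cone lin]; split => /=.
  rewrite ler_enorm !dotvZl !dotvZr !mulrA.
  by apply: ler_wpM2l; [rewrite -expr2 sqr_ge0 | rewrite -ler_enorm].
by rewrite !dotvZr -mulrDr mulr_ge0_le0.
Qed.

End FreeSets.

Section Ray.
Variables (R : realType) (n m : nat) (lam : 'rV[R]_n) (beta e : 'rV[R]_m).
Hypotheses (lam1 : dotv lam lam = 1) (beta1 : dotv beta beta = 1).
Hypotheses (beta_e : dotv beta e = 0) (e1 : dotv e e = 1).

Definition ray (x : 'rV[R]_n) (t : R) : 'rV[R]_n * 'rV[R]_m :=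
  (x + t *: lam, (t + dotv lam x) *: beta + enorm (perp lam x) *: e).

Lemma ray_on_cone x t : dotv (ray x t).1 (ray x t).1 = dotv (ray x t).2 (ray x t).2.
Proof.
have r2 := sqr_enorm (perp lam x); rewrite dotvv_perp // in r2.
rewrite /= !dotvE lam1 beta1 beta_e e1 (dotvC e beta) beta_e (dotvC x lam).
by nra.
Qed.

Lemma ray_in_S_le0 (a : 'rV[R]_n) (d : 'rV[R]_m) x :
  enorm a <= enorm d -> dotv a lam + dotv d beta <= 0 ->
  dotv d e <= - enorm (perp beta d) ->
  exists T, forall t, T <= t -> S_le0 a d (ray x t).
Proof.
move=> ad Gbeta de.
set A := enorm (perp lam a); set B := enorm (perp beta d).
set r := enorm (perp lam x); set s := - (dotv a lam + dotv d beta).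
have r0 : 0 <= r := enorm_ge0 _.
have B0 : 0 <= B := enorm_ge0 _.
have lin t : dotv a (ray x t).1 + dotv d (ray x t).2
             <= r * A - (t + dotv lam x) * s - r * B.
  have ax : dotv a x - dotv lam x * dotv a lam <= A * r.
    by have := dotv_orth_le a (dotv_perp lam1 x); rewrite {1}/perp dotvBr dotvZr.
  have rde : r * dotv d e <= r * - B := ler_wpM2l r0 de.
  rewrite /= !dotvE /s -/r; nra.
have cone t : enorm (ray x t).1 <= enorm (ray x t).2 by rewrite ler_enorm ray_on_cone.
have s_ge0 : 0 <= s by rewrite oppr_ge0.
have [s0|s_neq0] := eqVneq s 0.
- exists 0 => t _; split => //; apply: le_trans (lin t) _.
  have AB : A <= B.
    rewrite ler_enorm !dotvv_perp // (dotvC lam a) (dotvC beta d).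
    have -> : dotv a lam = - dotv d beta by rewrite /s in s0; lra.
    by rewrite sqrrN lerD2r -ler_enorm.
  by rewrite s0 mulr0 subr0 subr_le0 ler_wpM2l.
- have s_gt0 : 0 < s by rewrite lt_def s_neq0.
  exists (r * A / s - dotv lam x) => t tT; split => //; apply: le_trans (lin t) _.
  have : r * A <= (t + dotv lam x) * s by rewrite -ler_pdivrMr // -lerBlDr.
  have := mulr_ge0 r0 B0; lra.
Qed.

End Ray.

Theorem proposition1 (R : realType) (n m : nat) (hn : (1 <= n)%N) (hm : (1 < m)%N)
  (a : 'rV[R]_n) (d : 'rV[R]_m) (had : enorm a <= enorm d)
  (lam : 'rV[R]_n) (hlam : enorm lam = 1)
  (hCG : exists z : 'rV[R]_n * 'rV[R]_m, C_G a lam d z)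
  (C : 'rV[R]_n * 'rV[R]_m -> Prop)
  (hC : S_free (S_le0 a d) C)
  (hsub : forall z, C_lam lam z -> C z) :
  forall z, C z -> C_G a lam d z.
Proof.
move=> z Cz beta [hbeta Gbeta]; rewrite leNgt; apply/negP => delta_gt0.
have lam1 : dotv lam lam = 1 by rewrite -sqr_enorm hlam expr1n.
have beta1 : dotv beta beta = 1 by rewrite -sqr_enorm hbeta expr1n.
have [e [beta_e e1 de]] := exists_unit_orthogonal_below d hm beta1.
have [T rayS] := ray_in_S_le0 lam1 beta1 beta_e e1 z.1 had Gbeta de.
pose g := (ray lam beta e z.1 0).2 - z.2.
have beta_g : dotv beta g < 0 by rewrite /g /= !dotvE beta1 beta_e; lra.
have [T' far] := enormZD_lt_eventually beta1 beta_g.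
pose M := Num.max T T'.
have interior_v : interior_e C (M *: lam, M *: beta + g).
  apply: sub_interior_e hsub _ (interior_C_lam hlam _) => /=.
  by rewrite dotvZr lam1 mulr1 far // le_max lexx orbT.
have half : 1 - 2^-1 = 2^-1 :> R by lra.
have midpoint : (2^-1 *: (M *: lam) + (1 - 2^-1) *: z.1,
                 2^-1 *: (M *: beta + g) + (1 - 2^-1) *: z.2)
    = (2^-1 *: (ray lam beta e z.1 M).1, 2^-1 *: (ray lam beta e z.1 M).2).
  congr pair; rewrite half -scalerDr; congr (_ *: _); first by rewrite addrC.
  by rewrite /g -addrA subrK /= add0r scalerDl addrA.
apply: hC.2 (convex_interior_e (t := 2^-1) hC.1 Cz interior_v _ _) _; [lra | lra |].
by rewrite midpoint; apply: S_le0Z; [lra | apply: rayS; rewrite le_max lexx].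
Qed.
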